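(* Let $G$ be a finite group and $H \leqslant G$ a Hall subgroup (i.e. $\gcd(|H|, |G:H|)=1$). If $H$ is exponential in $G$, then $H \lhd G$.
   Context: A subgroup $H$ of finite index in a group $G$ is called exponential in $G$ if $x^{|G:H|} \in H$ for every $x \in G$. *)

From mathcomp Require Import all_boot all_fingroup all_solvable.
Set Implicit Arguments. Unset Strict Implicit. Unset Printing Implicit Defensive.
Local Open Scope group_scope.

Definition exponential_in (gT : finGroupType) (G H : {set gT}) : Prop :=
  forall x, x \in G -> x ^+ #|G : H| \in H.

From mathcomp Require Import all_boot all_fingroup all_solvable.
Local Open Scope group_scope.

(* If x lies in G and #[x] divides |H|, then #[x] is coprime to |G:H|, so
   x ^+ |G:H| generates <[x]>; exponentiality puts that generator in H, hence
   x is in H.  Every conjugate of an element of H satisfies this, so H ^ g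
   is contained in H for all g in G. *)

Lemma mem_coprime_expg (gT : finGroupType) (H : {group gT}) (x : gT) n :
  coprime #[x] n -> x ^+ n \in H -> x \in H.
Proof.
move=> co_x_n xnH.
have /eqP gen_xn : generator <[x]> (x ^+ n) by rewrite generator_coprime.
by rewrite -cycle_subG gen_xn cycle_subG.
Qed.

Lemma exponential_Hall_mem (gT : finGroupType) (G H : {group gT}) (x : gT) :
    Hall G H -> exponential_in G H ->
  x \in G -> #[x] %| #|H| -> x \in H.
Proof.
move=> /andP[_ coH_iH] expH Gx dvd_x_H.
exact: mem_coprime_expg (coprime_dvdl dvd_x_H coH_iH) (expH x Gx).
Qed.

Theorem corollary4p4 (gT : finGroupType) (G H : {group gT}) :
  Hall G H -> exponential_in G H -> H <| G.
Proof.
move=> hallH expH; have /andP[sHG _] := hallH.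
rewrite /normal sHG; apply/normsP => g Gg.
apply/eqP; rewrite eqEcard cardJg leqnn andbT.
apply/subsetP => _ /imsetP[h Hh ->].
apply: exponential_Hall_mem hallH expH _ _.
- by rewrite groupJ // (subsetP sHG).
- by rewrite orderJ order_dvdG.
Qed.
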